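(* Let $G$ be a finite simple graph that contains a cycle of odd length. Then $S(G)$ contains a subdivision of $K_{3,3}$ as a subgraph.
   Context: For a graph $G$, the great shadow $S(G)$ is the graph obtained from $G$ by adding, for each vertex $v$ of $G$, a new vertex $v'$ (the shadow vertex of $v$) and making $v'$ adjacent to $v$ and to every neighbor of $v$ in $G$; no other edges are added. A subdivision of a graph $F$ is a graph obtained from $F$ by replacing edges with internally vertex-disjoint paths. *)

From mathcomp Require Import all_boot.
Set Implicit Arguments. Unset Strict Implicit. Unset Printing Implicit Defensive.

Definition simple_graph (T : finType) (e : rel T) : Prop :=
  irreflexive e /\ symmetric e.

Definition has_odd_cycle (T : finType) (e : rel T) : Prop :=
  exists c : seq T, [/\ uniq c, 3 <= size c, odd (size c) & cycle e c].

(* The great shadow S(G): vertices inl v (original) and inr v (shadow v'),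
   v' adjacent to v and to every neighbour of v; no edges among shadows. *)
Definition great_shadow (T : finType) (e : rel T) : rel (T + T) :=
  fun x y =>
    match x, y with
    | inl u, inl v => e u v
    | inl u, inr v => (u == v) || e v u
    | inr u, inl v => (u == v) || e u v
    | inr _, inr _ => false
    end.

(* H (on V) contains a subdivision of K_{3,3} as a subgraph: six distinct
   branch vertices a_0..a_2, b_0..b_2 and nine paths a_i -- P i j -- b_j
   (P i j = list of internal vertices) which are internally vertex-disjoint
   and whose internal vertices avoid the branch vertices. *)
Definition has_K33_subdivision (V : finType) (h : rel V) : Prop :=
  exists (a b : 'I_3 -> V) (P : 'I_3 -> 'I_3 -> seq V),
    [/\ injective a /\ injective b, (forall i j, a i != b j),
        (forall i j, path h (a i) (rcons (P i j) (b j)) /\ uniq (P i j)),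
        (forall i j x, x \in P i j -> (forall k, x != a k) /\ (forall k, x != b k))
      & (forall i j i' j', (i, j) != (i', j') ->
           forall x, x \in P i j -> x \notin P i' j')].

From mathcomp Require Import all_boot.

Set Implicit Arguments.
Unset Strict Implicit.
Unset Printing Implicit Defensive.

(* Write the odd cycle as v0 v1 v2 s v0, so that s has even length.  In S(G)
   take the branch vertices v0, v1, v2 on one side and their shadows v0', v1',
   v2' on the other: vi vj' is an edge whenever i = j or vi vj is an edge,
   i.e. for every pair except {v2, v0'} and {v0, v2'}.  These two pairs are
   joined by walking along s and alternating between a vertex and a shadow;
   starting the alternation with opposite phases makes the two walks disjoint,
   and the even length of s makes each walk end on the side opposite to
   the one it starts from. *)

Section Zigzag.

Variable T : Type.

Definition shadow_copy (b : bool) (u : T) : T + T := if b then inr u else inl u.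

Definition shadow_proj (x : T + T) : T := match x with inl u | inr u => u end.

Lemma shadow_copyK b : cancel (shadow_copy b) shadow_proj.
Proof. by case: b. Qed.

Fixpoint zigzag (b : bool) (s : seq T) : seq (T + T) :=
  if s is u :: s' then shadow_copy b u :: zigzag (~~ b) s' else [::].

Lemma map_proj_zigzag b s : map shadow_proj (zigzag b s) = s.
Proof. by elim: s b => //= u s IH b; rewrite shadow_copyK IH. Qed.

Lemma zigzag_rcons b s u :
  zigzag b (rcons s u) =
  rcons (zigzag b s) (shadow_copy (b (+) odd (size s)) u).
Proof.
elim: s b => [|v s IH] b /=; first by rewrite addbF.
by rewrite IH addNb addbN.
Qed.

End Zigzag.

Section ZigzagMembership.

Variable T : eqType.

Lemma mem_zigzag_proj b (s : seq T) x :
  x \in zigzag b s -> shadow_proj x \in s.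
Proof. by move=> xz; rewrite -(map_proj_zigzag b s) map_f. Qed.

Lemma zigzag_uniq b (s : seq T) : uniq s -> uniq (zigzag b s).
Proof.
move=> s_uniq; apply: (map_uniq (f := @shadow_proj T)).
by rewrite map_proj_zigzag.
Qed.

Lemma zigzag_disjoint b (s : seq T) x :
  uniq s -> x \in zigzag b s -> x \notin zigzag (~~ b) s.
Proof.
elim: s b => //= u s IH b /andP[u_notin_s s_uniq].
have copy_notin c c' : shadow_copy c u \notin zigzag c' s.
  by apply: contra u_notin_s => /mem_zigzag_proj; rewrite shadow_copyK.
rewrite !inE negbK => /orP[/eqP-> | xz]; apply/norP; split.
- by case: b.
- exact: copy_notin.
- by apply: contraNneq (copy_notin (~~ b) (~~ b)) => <-.
- by have := IH (~~ b) s_uniq xz; rewrite negbK.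
Qed.

End ZigzagMembership.

Section ShadowPaths.

Variables (T : finType) (e : rel T).
Hypothesis e_sym : symmetric e.

Lemma great_shadow_sym : symmetric (great_shadow e).
Proof. by case=> u [] v //=; rewrite e_sym // eq_sym. Qed.

Lemma great_shadow_copy b u v :
  e u v -> great_shadow e (shadow_copy b u) (shadow_copy (~~ b) v).
Proof. by case: b => /= euv; rewrite ?(e_sym v) euv orbT. Qed.

Lemma path_zigzag b u s :
  path e u s -> path (great_shadow e) (shadow_copy b u) (zigzag (~~ b) s).
Proof.
elim: s b u => //= v s IH b u /andP[euv vs].
by rewrite great_shadow_copy // IH.
Qed.

End ShadowPaths.

Lemma path_rcons_rev (T : Type) (h : rel T) x q z :
  symmetric h -> path h x (rcons q z) -> path h z (rcons (rev q) x).
Proof.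
move=> h_sym; have := rev_path h x (rcons q z).
rewrite last_rcons belast_rcons rev_cons => ->.
by rewrite (@eq_path _ _ h) // => u v; rewrite h_sym.
Qed.

Lemma K33_subdivision_two_paths (V : finType) (h : rel V) (a b : 'I_3 -> V)
    (i1 j1 i2 j2 : 'I_3) (p q : seq V) :
  injective a -> injective b -> (forall i j, a i != b j) ->
  (forall i j, (i, j) != (i1, j1) -> (i, j) != (i2, j2) -> h (a i) (b j)) ->
  path h (a i1) (rcons p (b j1)) -> path h (a i2) (rcons q (b j2)) ->
  uniq p -> uniq q ->
  (forall x, x \in p ++ q -> (forall k, x != a k) /\ (forall k, x != b k)) ->
  (forall x, x \in p -> x \notin q) ->
  has_K33_subdivision h.
Proof.
move=> a_inj b_inj ab_neq ab_edge p_path q_path p_uniq q_uniq pq_avoid pq_disj.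
pose P i j :=
  if (i, j) == (i1, j1) then p else if (i, j) == (i2, j2) then q else [::].
have memP i j x : x \in P i j ->
    (i, j) = (i1, j1) /\ x \in p \/ (i, j) = (i2, j2) /\ x \in q.
  by rewrite /P; case: eqP => [|_]; [left | case: eqP => [|_] //; right].
exists a, b, P; split=> //.
- move=> i j; rewrite /P; case: eqP => [[-> ->] | ne1] //.
  case: eqP => [[-> ->] | ne2] //=; rewrite andbT.
  by rewrite ab_edge //; apply/eqP.
- move=> i j x /memP[[_ xp] | [_ xq]]; apply: pq_avoid;
    by rewrite mem_cat ?xp ?xq ?orbT.
- move=> i j i' j' ne x /memP[[E xp] | [E xq]];
    apply/negP => /memP[[E' xp'] | [E' xq']].
  + by move: ne; rewrite E E' eqxx.
  + by move: (pq_disj x xp); rewrite xq'.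
  + by move: (pq_disj x xp'); rewrite xq.
  + by move: ne; rewrite E E' eqxx.
Qed.

Theorem lemma5p1 (T : finType) (e : rel T) :
  simple_graph e -> has_odd_cycle e -> has_K33_subdivision (great_shadow e).
Proof.
move=> [_ e_sym] [[|v0 [|v1 [|v2 s]]] [c_uniq _ c_odd c_cycle]] //.
move: c_cycle => /= /and3P[e01 e12 s_path].
have s_even : odd (size s) = false.
  by move: c_odd => /=; rewrite negbK => /negbTE.
set t := [tuple v0; v1; v2].
have /and3P[t_uniq t_notin_s s_uniq] : [&& uniq t, ~~ has (mem t) s & uniq s].
  by rewrite -cat_uniq.
have tnth_notin k : tnth t k \notin s.
  by apply: contraL (mem_tnth k t); apply/hasPn.
have t_inj : injective (tnth t) by apply/tuple_uniqP.
have a_inj : injective (@inl T T \o tnth t) by move=> i j /= [/t_inj].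
have b_inj : injective (@inr T T \o tnth t) by move=> i j /= [/t_inj].
apply: (K33_subdivision_two_paths a_inj b_inj
          (i1 := ord_max) (j1 := ord0) (i2 := ord0) (j2 := ord_max)
          (p := zigzag true s) (q := rev (zigzag false s))).
- by [].
- case=> [[|[|[|?]]] ?] [[|[|[|?]]] ?] //= _ _; rewrite !(tnth_nth v0) /=;
    by rewrite ?eqxx ?(e_sym v1 v0) ?(e_sym v2 v1) ?e01 ?e12 ?orbT.
- by have := path_zigzag e_sym false s_path; rewrite zigzag_rcons s_even.
- have := path_zigzag e_sym true s_path; rewrite zigzag_rcons s_even.
  exact: path_rcons_rev (great_shadow_sym e_sym).
- exact: zigzag_uniq.
- by rewrite rev_uniq zigzag_uniq.
- move=> x; rewrite mem_cat mem_rev => /orP[] /mem_zigzag_proj xs;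
    by split=> k; apply: contraTneq xs => ->; apply: tnth_notin.
- by move=> x xz; rewrite mem_rev; exact: zigzag_disjoint s_uniq xz.
Qed.
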